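(* Consider a deterministic MDP with finite state space $\mathcal{S}$, finite action space $\mathcal{A}$, deterministic transition $f$, reward $r$, initial state distribution $\mu$, and KL-regularization coefficient $\beta>0$. Let $\pi_{\mathrm{ref}}$ be a reference policy with $\pi_{\mathrm{ref}}(a|s)>0$ for all $s\in\mathcal{S},a\in\mathcal{A}$. Let $\nu_{\mathcal{S}}\in\Delta(\mathcal{S})$ and, for each $s$, $\nu_{\mathcal{A}}(\cdot|s)\in\Delta(\mathcal{A})$ be exploratory, i.e. $\nu_{\mathcal{S}}(s)>0$ and $\nu_{\mathcal{A}}(a|s)>0$ for all $s,a$. Let $\pi^+$ be the solution of $$\min_{\pi\in\Pi}\ \frac12\,\mathbb{E}_{s\sim\nu_{\mathcal{S}}}\mathbb{E}_{a\sim\nu_{\mathcal{A}}(\cdot|s)}\left[\left(\frac1\beta A^{\pi_{\mathrm{ref}}}(s,a)-\log\frac{\pi(a|s)}{\pi_{\mathrm{ref}}(a|s)}\right)^2\right],$$ where $\Pi$ is the set of all policies. Then for every state $s\in\mathcal{S}$ there exists a function $\lambda_s:\Delta(\mathcal{A})\to[0,+\infty)$ such that $$V_\beta^{\pi^+}(\mu)-V_\beta^{\pi_{\mathrm{ref}}}(\mu)\ \ge\ \mathbb{E}_\mu^{\pi^+}\big[\lambda_s(\nu_{\mathcal{A}}(\cdot|s))\big]\ \ge\ 0,$$ and equality holds if and only if $\pi_{\mathrm{ref}}=\pi^*_\beta$.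
   Context: The MDP is deterministic: $s_{t+1}=f(s_t,a_t)$, episodes terminate after a finite (possibly random) number $T$ of steps at a terminal state, and the reward is nonzero only on reaching a terminal state. A policy $\pi$ assigns to each state a distribution $\pi(\cdot|s)\in\Delta(\mathcal{A})$. Unregularized value: $V^\pi(s)=\mathbb{E}[\sum_{t=0}^{T-1} r(s_t,a_t)\mid s_0=s]$ with $a_t\sim\pi(\cdot|s_t)$; $Q^\pi(s,a)=r(s,a)+V^\pi(f(s,a))$; advantage $A^\pi(s,a)=Q^\pi(s,a)-V^\pi(s)$. KL-regularized value: $V_\beta^\pi(s)=\mathbb{E}\big[\sum_{t=0}^{T-1}\big(r(s_t,a_t)-\beta\log\frac{\pi(a_t|s_t)}{\pi_{\mathrm{ref}}(a_t|s_t)}\big)\mid s_0=s\big]$, and $V_\beta^\pi(\mu)=\mathbb{E}_{s\sim\mu}V_\beta^\pi(s)$. $\pi^*_\beta$ denotes the optimal policy maximizing $V_\beta^\pi$. For a function $g$ of states, $\mathbb{E}_\mu^\pi[g(s)]$ denotes $\mathbb{E}[\sum_{t=0}^{T-1} g(s_t)]$ over trajectories with $s_0\sim\mu$, $a_t\sim\pi(\cdot|s_t)$, $s_{t+1}=f(s_t,a_t)$ (the expectation over states visited by $\pi$ from $\mu$). *)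

From HB Require Import structures.
From mathcomp Require Import all_boot all_order all_algebra.
From mathcomp Require Import all_classical all_reals all_analysis.
Set Implicit Arguments. Unset Strict Implicit. Unset Printing Implicit Defensive.
Import Order.TTheory GRing.Theory Num.Theory.
Local Open Scope ring_scope.

Section DetMDP.
Variables (R : realType) (S A : finType).

Definition is_dist (T : finType) (p : T -> R) : Prop :=
  (forall x, 0 <= p x) /\ \sum_(x : T) p x = 1.

(* a (stochastic, Markov) policy: pi s a = pi(a|s) *)
Definition is_policy (pi : S -> A -> R) : Prop := forall s, is_dist (pi s).

Variables (term : pred S) (f : S -> A -> S).

(* Expected accumulated per-step quantity g(s_t,a_t) along the trajectory
   of pi from s, stopped at the first terminal state, truncated after n steps:
   E[ sum_{t=0}^{min(T,n)-1} g(s_t,a_t) | s_0 = s ]. *)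
Fixpoint traj_sum (g : S -> A -> R) (pi : S -> A -> R) (n : nat) (s : S) : R :=
  match n with
  | 0 => 0
  | n'.+1 => if term s then 0
             else \sum_(a : A) pi s a * (g s a + traj_sum g pi n' (f s a))
  end.

(* Horizon: under the termination hypothesis (a strictly decreasing rank on
   non-terminal states) every episode ends within #|S| steps, so this is the
   full (untruncated) sum up to the termination time T. *)
Definition horizon : nat := #|S|.

Definition V (r : S -> A -> R) (pi : S -> A -> R) (s : S) : R :=
  traj_sum r pi horizon s.

Definition Qf (r : S -> A -> R) (pi : S -> A -> R) (s : S) (a : A) : R :=
  r s a + V r pi (f s a).
Definition Adv (r : S -> A -> R) (pi : S -> A -> R) (s : S) (a : A) : R :=
  Qf r pi s a - V r pi s.

Definition Vreg (r : S -> A -> R) (beta : R) (piref pi : S -> A -> R) (s : S) : R :=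
  traj_sum (fun s a => r s a - beta * ln (pi s a / piref s a)) pi horizon s.

Definition Vreg_mu (r : S -> A -> R) (beta : R) (piref pi : S -> A -> R)
  (mu : S -> R) : R :=
  \sum_(s : S) mu s * Vreg r beta piref pi s.

(* E_mu^pi[g(s)] = E[ sum_{t=0}^{T-1} g(s_t) ], s_0 ~ mu, a_t ~ pi *)
Definition occ_exp (pi : S -> A -> R) (mu : S -> R) (g : S -> R) : R :=
  \sum_(s : S) mu s * traj_sum (fun s _ => g s) pi horizon s.

Definition loss (r : S -> A -> R) (beta : R) (piref : S -> A -> R)
  (nuS : S -> R) (nuA : S -> A -> R) (pi : S -> A -> R) : R :=
  2^-1 * \sum_(s : S) nuS s * \sum_(a : A) nuA s a *
     (beta^-1 * Adv r piref s a - ln (pi s a / piref s a)) ^+ 2.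

Definition is_optimal (r : S -> A -> R) (beta : R) (piref : S -> A -> R)
  (mu : S -> R) (pi : S -> A -> R) : Prop :=
  is_policy pi /\
  forall pi', is_policy pi' -> Vreg_mu r beta piref pi' mu <= Vreg_mu r beta piref pi mu.

End DetMDP.

(* At a non-terminal state the regression target y = A^{π_ref}(s,·)/β satisfies
   Σ_a π_ref(a|s) e^{y(a)} ≥ 1, because e^y ≥ 1 + y and Σ_a π_ref(a|s) A(s,a) = 0.
   A minimiser π⁺ of the squared log-ratio loss therefore never exceeds the tilt
   π_ref e^{y}: if it did at some action, it would fall below it at another one, and
   moving a little mass between the two would lower the loss.  So A ≥ β log(π⁺/π_ref)
   pointwise and the soft gain λ_s = Σ_a π⁺(a|s) (A(s,a) - β log(π⁺(a|s)/π_ref(a|s)))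
   is nonnegative.  By the performance-difference identity, V_β^{π⁺} - V^{π_ref}
   is exactly the expected sum of λ along π⁺-trajectories.  If it vanishes, then
   A = β log(π⁺/π_ref) on every state π⁺ reaches from supp μ, and Gibbs' inequality
   shows that no policy beats V^{π_ref} from those states; conversely, optimality of
   π_ref makes the gap nonpositive. *)

From HB Require Import structures.
From mathcomp Require Import all_boot all_order all_algebra.
From mathcomp Require Import all_classical all_reals all_analysis.
From mathcomp Require Import ring lra.
Set Implicit Arguments. Unset Strict Implicit. Unset Printing Implicit Defensive.
Import Order.TTheory GRing.Theory Num.Theory.
Local Open Scope ring_scope.

Section LogRatio.
Variable R : realType.

Lemma mul_ln_ratioB_le (x q p : R) : 0 <= x -> 0 < q -> 0 < p ->
  x * (ln (q / p) - ln (x / p)) <= q - x.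
Proof.
move=> x_ge0 q_gt0 p_gt0; have [->|x_neq0] := eqVneq x 0; first by rewrite mul0r subr0 ltW.
have x_gt0 : 0 < x by rewrite lt0r x_neq0.
have -> : ln (q / p) - ln (x / p) = ln (q / x).
  by rewrite !ln_div ?posrE //; ring.
have := @le_ln1Dx R (q / x - 1); rewrite [1 + _]addrC subrK.
move=> /(_ _)/(ler_wpM2l (ltW x_gt0)); rewrite mulrBr mulr1 mulrCA divff ?mulr1 ?gt_eqF //.
by apply; rewrite ltrBrDl subrr divr_gt0.
Qed.

Lemma sqr_dev_ln_lt (y p u v : R) : 0 < p -> p * expR y <= u -> u < v ->
  (y - ln (u / p)) ^+ 2 < (y - ln (v / p)) ^+ 2.
Proof.
move=> p_gt0 eu uv; have u_gt0 : 0 < u := lt_le_trans (mulr_gt0 p_gt0 (expR_gt0 y)) eu.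
have y_le : y <= ln (u / p).
  by rewrite -[y]expRK ler_ln ?posrE ?expR_gt0 ?divr_gt0 // ler_pdivlMr // mulrC.
have ln_lt : ln (u / p) < ln (v / p).
  by rewrite ltr_ln ?posrE ?divr_gt0 ?ltr_pM2r ?invr_gt0 // (lt_trans u_gt0).
rewrite !expr2; nra.
Qed.

Lemma sqr_dev_ln_le (y p u v : R) : 0 < p -> 0 < u -> u <= v -> v <= p * expR y ->
  (y - ln (v / p)) ^+ 2 <= (y - ln (u / p)) ^+ 2.
Proof.
move=> p_gt0 u_gt0 uv ve; have v_gt0 : 0 < v := lt_le_trans u_gt0 uv.
have le_y : ln (v / p) <= y.
  by rewrite -[y]expRK ler_ln ?posrE ?expR_gt0 ?divr_gt0 // ler_pdivrMr // mulrC.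
have ln_le : ln (u / p) <= ln (v / p).
  by rewrite ler_ln ?posrE ?divr_gt0 ?ler_pM2r ?invr_gt0.
rewrite !expr2; nra.
Qed.

Lemma exists_lt_of_sum_le (I : finType) (q e : I -> R) (b : I) :
  \sum_c q c <= \sum_c e c -> e b < q b -> exists a, q a < e a.
Proof.
move=> le_sum lt_b; have [//|/forallNP ge_all] := pselect (exists a, q a < e a).
exfalso; move: le_sum; apply/negP; rewrite -ltNge.
rewrite [ltRHS](bigD1 b) //= [ltLHS](bigD1 b) //= ltr_leD // ler_sum // => c _.
by rewrite leNgt; apply/negP => /ge_all.
Qed.

Lemma bigD2 (I : finType) (a b : I) (F : I -> R) : a != b ->
  \sum_c F c = F a + F b + \sum_(c | (c != a) && (c != b)) F c.
Proof.
move=> neq_ab; rewrite (bigD1 a) //= (bigD1 b) /=; last by rewrite eq_sym.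
by rewrite addrA.
Qed.

Lemma sqr_dev_ln_argmin_le_tilt (I : finType) (w p q y : I -> R) :
  (forall a, 0 < w a) -> (forall a, 0 < p a) -> (forall a, 0 < q a) ->
  \sum_a q a = 1 -> 1 <= \sum_a p a * expR (y a) ->
  (forall q', (forall a, 0 < q' a) -> \sum_a q' a = 1 ->
    \sum_a w a * (y a - ln (q a / p a)) ^+ 2 <=
    \sum_a w a * (y a - ln (q' a / p a)) ^+ 2) ->
  forall b, q b <= p b * expR (y b).
Proof.
move=> w_gt0 p_gt0 q_gt0 sum_q sum_e q_min b; rewrite leNgt; apply/negP => lt_b.
pose e c := p c * expR (y c).
have [a lt_a] : exists a, q a < e a by apply: exists_lt_of_sum_le lt_b; rewrite sum_q.
have neq_ab : a != b by apply: contraTneq lt_b => <-; rewrite -leNgt ltW.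
pose eta := Order.min (q b - e b) (e a - q a).
have eta_gt0 : 0 < eta by rewrite lt_min !subr_gt0 lt_a lt_b.
have eta_le_b : eta <= q b - e b by rewrite ge_min lexx.
have eta_le_a : eta <= e a - q a by rewrite ge_min lexx orbT.
pose q' c := if c == b then q b - eta else if c == a then q a + eta else q c.
have q'_b : q' b = q b - eta by rewrite /q' eqxx.
have q'_a : q' a = q a + eta by rewrite /q' (negbTE neq_ab) eqxx.
have q'_rest c : (c != a) && (c != b) -> q' c = q c.
  by case/andP => /negbTE ca /negbTE cb; rewrite /q' ca cb.
have e_gt0 c : 0 < e c by rewrite mulr_gt0 ?expR_gt0.
have q'_gt0 c : 0 < q' c.
  rewrite /q'; case: ifP => _; first by have := e_gt0 b; lra.
  by case: ifP => _ //; have := q_gt0 a; lra.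
have sum_q' : \sum_c q' c = 1.
  rewrite -sum_q !(bigD2 _ neq_ab) q'_a q'_b (eq_bigr q) => [|c /q'_rest //].
  lra.
have := q_min q' q'_gt0 sum_q'; apply/negP; rewrite -ltNge.
rewrite !(bigD2 _ neq_ab) q'_a q'_b (eq_bigr (fun c => w c * (y c - ln (q c / p c)) ^+ 2)).
  rewrite ltrD2r addrC [ltRHS]addrC ltr_leD //.
    by rewrite ltr_pM2l // sqr_dev_ln_lt ?p_gt0 // -/(e b); lra.
  by rewrite ler_pM2l // sqr_dev_ln_le ?p_gt0 // -/(e a); lra.
by move=> c /q'_rest ->.
Qed.
End LogRatio.

Section Trajectory.
Variables (R : realType) (S A : finType) (term : pred S) (f : S -> A -> S).
Variable rank : S -> nat.
Hypothesis rank_step : forall s a, ~~ term s -> (rank (f s a) < rank s)%N.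

Local Notation traj g pi := (traj_sum term f g pi (horizon S)).

(* Unlike [rank], [depth] is bounded by [#|S| = horizon S], so it bounds the
   number of steps before termination that [traj_sum] has to unroll. *)
Definition depth (s : S) : nat := #|[set s' | (rank s' <= rank s)%N]|.

Lemma depth_gt0 s : (0 < depth s)%N.
Proof. by apply/card_gt0P; exists s; rewrite inE. Qed.

Lemma depth_step s a : ~~ term s -> (depth (f s a) < depth s)%N.
Proof.
move=> nterm_s; apply: proper_card; apply/properP; split.
  apply/fintype.subsetP => s'; rewrite !inE => /leq_trans; apply.
  exact/ltnW/rank_step.
by exists s; rewrite !inE // -ltnNge rank_step.
Qed.

Lemma traj_sum_stable (g pi : S -> A -> R) n s : (depth s <= n)%N ->
  traj_sum term f g pi n s = traj g pi s.
Proof.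
have stable m k s' : (depth s' <= m)%N -> (depth s' <= k)%N ->
    traj_sum term f g pi m s' = traj_sum term f g pi k s'.
  elim: m k s' => [|m IH] [|k] s' le_m le_k;
    [by rewrite leqNgt depth_gt0 in le_m.. | by rewrite leqNgt depth_gt0 in le_k |].
  rewrite /=; case: ifP => // /negbT nterm; apply: eq_bigr => a _.
  by rewrite (IH k) // -ltnS (leq_trans (depth_step a nterm)).
by move=> le_n; apply: stable; rewrite // /horizon max_card.
Qed.

Lemma traj_sum_term (g pi : S -> A -> R) s : term s -> traj g pi s = 0.
Proof.
move=> term_s; rewrite -(traj_sum_stable g pi (leqnn (depth s))).
by case: (depth s) (depth_gt0 s) => // k _ /=; rewrite term_s.
Qed.

Lemma traj_sum_step (g pi : S -> A -> R) s : ~~ term s ->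
  traj g pi s = \sum_a pi s a * (g s a + traj g pi (f s a)).
Proof.
move=> nterm_s; rewrite -(traj_sum_stable g pi (leqnn (depth s))).
move: (fun a => depth_step a nterm_s) (depth_gt0 s); case: (depth s) => // k lt_fs _ /=.
rewrite (negbTE nterm_s); apply: eq_bigr => a _.
by rewrite traj_sum_stable // -ltnS lt_fs.
Qed.

Lemma traj_sum_ge0 (g pi : S -> A -> R) n s :
  (forall s a, 0 <= g s a) -> (forall s a, 0 <= pi s a) -> 0 <= traj_sum term f g pi n s.
Proof.
move=> g_ge0 pi_ge0; elim: n s => [|n IH] s //=; case: ifP => // _.
by apply: sumr_ge0 => a _; rewrite mulr_ge0 ?addr_ge0.
Qed.

Lemma traj_sum_eq0_step (g pi : S -> A -> R) s a :
  (forall s a, 0 <= g s a) -> (forall s a, 0 < pi s a) -> ~~ term s ->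
  traj g pi s = 0 -> g s a = 0 /\ traj g pi (f s a) = 0.
Proof.
move=> g_ge0 pi_gt0 nterm_s.
have pi_ge0 s' a' : 0 <= pi s' a' by rewrite ltW.
have traj_ge0 s' : 0 <= traj g pi s' by rewrite traj_sum_ge0.
have summand_ge0 a' : true -> 0 <= pi s a' * (g s a' + traj g pi (f s a')).
  by rewrite mulr_ge0 ?addr_ge0.
rewrite traj_sum_step // => /(psumr_eq0P summand_ge0)/(_ a isT)/eqP.
by rewrite mulf_eq0 gt_eqF //= paddr_eq0 // => /andP[/eqP -> /eqP ->].
Qed.

Lemma traj_sum_unique (g pi : S -> A -> R) (h : S -> R) :
  (forall s, term s -> h s = 0) ->
  (forall s, ~~ term s -> h s = \sum_a pi s a * (g s a + h (f s a))) ->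
  forall s, h s = traj g pi s.
Proof.
move=> h_term h_step s; have [n] := ubnP (rank s); elim: n s => // n IH s lt_sn.
have [term_s|nterm_s] := boolP (term s); first by rewrite h_term ?traj_sum_term.
rewrite h_step // traj_sum_step //; apply: eq_bigr => a _.
by rewrite IH // (leq_trans (rank_step a nterm_s)).
Qed.

Lemma traj_sum_le_supersolution (g pi : S -> A -> R) (P : pred S) (h : S -> R) :
  (forall s a, 0 <= pi s a) ->
  (forall s a, P s -> ~~ term s -> P (f s a)) ->
  (forall s, P s -> term s -> 0 <= h s) ->
  (forall s, P s -> ~~ term s -> \sum_a pi s a * (g s a + h (f s a)) <= h s) ->
  forall s, P s -> traj g pi s <= h s.
Proof.
move=> pi_ge0 P_step h_term h_super s; have [n] := ubnP (rank s).
elim: n s => // n IH s lt_sn Ps.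
have [term_s|nterm_s] := boolP (term s); first by rewrite traj_sum_term ?h_term.
rewrite traj_sum_step //; apply: le_trans (h_super s Ps nterm_s).
apply: ler_sum => a _; rewrite ler_wpM2l // lerD2l IH ?P_step //.
exact: leq_trans (rank_step a nterm_s) _.
Qed.

Lemma occ_exp_ge0 (pi : S -> A -> R) (mu c : S -> R) :
  (forall s, 0 <= mu s) -> (forall s a, 0 <= pi s a) -> (forall s, 0 <= c s) ->
  0 <= occ_exp term f pi mu c.
Proof.
move=> mu_ge0 pi_ge0 c_ge0; apply: sumr_ge0 => s _.
by rewrite mulr_ge0 ?traj_sum_ge0.
Qed.
End Trajectory.

Section SoftPerformanceDifference.
Variables (R : realType) (S A : finType) (term : pred S) (f : S -> A -> S).
Variables (r : S -> A -> R) (beta : R) (piref : S -> A -> R).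
Variable rank : S -> nat.
Hypothesis rank_step : forall s a, ~~ term s -> (rank (f s a) < rank s)%N.
Hypothesis beta_gt0 : 0 < beta.
Hypothesis piref_policy : is_policy piref.
Hypothesis piref_gt0 : forall s a, 0 < piref s a.

Local Notation traj g pi := (traj_sum term f g pi (horizon S)).
Local Notation Vref := (V term f r piref).
Local Notation Aref := (Adv term f r piref).

Definition soft_gain (pi : S -> A -> R) (s : S) : R :=
  if term s then 0
  else \sum_a pi s a * (Aref s a - beta * ln (pi s a / piref s a)).

Lemma Vreg_ref s : Vreg term f r beta piref piref s = Vref s.
Proof.
rewrite /Vreg /V; congr traj_sum; apply/funext => s'.
by apply/funext => a; rewrite divff ?gt_eqF // ln1 mulr0 subr0.
Qed.

Lemma Vreg_sub_Vref (pi : S -> A -> R) : (forall s, \sum_a pi s a = 1) ->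
  forall s, Vreg term f r beta piref pi s - Vref s = traj (fun s _ => soft_gain pi s) pi s.
Proof.
move=> sum_pi; apply: (traj_sum_unique rank_step) => s.
  by move=> term_s; rewrite /Vreg /V !(traj_sum_term rank_step) // subrr.
move=> nterm_s; rewrite [Vreg _ _ _ _ _ _ s](traj_sum_step rank_step) // /soft_gain.
rewrite (negbTE nterm_s) -[Vref s]mul1r -(sum_pi s) mulr_suml -sumrB /=.
under [RHS]eq_bigr do rewrite mulrDr.
rewrite [RHS]big_split /= -mulr_suml sum_pi mul1r -big_split /=.
by apply: eq_bigr => a _; rewrite /Adv /Qf /Vreg; ring.
Qed.

Lemma Vreg_mu_sub (pi : S -> A -> R) (mu : S -> R) : (forall s, \sum_a pi s a = 1) ->
  Vreg_mu term f r beta piref pi mu - Vreg_mu term f r beta piref piref mu =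
  occ_exp term f pi mu (soft_gain pi).
Proof.
move=> sum_pi; rewrite /Vreg_mu -sumrB; apply: eq_bigr => s _.
by rewrite Vreg_ref -mulrBr Vreg_sub_Vref.
Qed.

Lemma soft_gain_ge0 (pi : S -> A -> R) : (forall s a, 0 <= pi s a) ->
  (forall s a, ~~ term s -> beta * ln (pi s a / piref s a) <= Aref s a) ->
  forall s, 0 <= soft_gain pi s.
Proof.
move=> pi_ge0 logratio_le s; rewrite /soft_gain; case: ifPn => // nterm_s.
by apply: sumr_ge0 => a _; rewrite mulr_ge0 ?subr_ge0 ?logratio_le.
Qed.

Lemma sum_piref_Adv s : ~~ term s -> \sum_a piref s a * Aref s a = 0.
Proof.
move=> nterm_s; rewrite /Adv /Qf.
under eq_bigr do rewrite mulrBr.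
by rewrite sumrB -mulr_suml (piref_policy s).2 mul1r -(traj_sum_step rank_step) // subrr.
Qed.

Lemma sum_piref_expR_Adv_ge1 s : ~~ term s ->
  1 <= \sum_a piref s a * expR (beta^-1 * Aref s a).
Proof.
move=> nterm_s; apply: (@le_trans _ _ (\sum_a piref s a * (1 + beta^-1 * Aref s a))).
  under eq_bigr do rewrite mulrDr mulr1 mulrCA.
  by rewrite big_split /= (piref_policy s).2 -mulr_sumr sum_piref_Adv // mulr0 addr0.
by apply: ler_sum => a _; rewrite ler_wpM2l ?expR_ge1Dx ?(piref_policy s).1.
Qed.

Lemma Adv_eq_logratio_of_soft_gain0 (pi : S -> A -> R) s :
  (forall a, 0 < pi s a) -> (forall a, beta * ln (pi s a / piref s a) <= Aref s a) ->
  ~~ term s -> soft_gain pi s = 0 -> forall a, Aref s a = beta * ln (pi s a / piref s a).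
Proof.
move=> pi_gt0 logratio_le nterm_s; rewrite /soft_gain (negbTE nterm_s).
have summand_ge0 a : true -> 0 <= pi s a * (Aref s a - beta * ln (pi s a / piref s a)).
  by move=> _; rewrite mulr_ge0 ?subr_ge0 // ltW.
move=> /(psumr_eq0P summand_ge0) eq0 a; have /eqP := eq0 a isT.
by rewrite mulf_eq0 gt_eqF //= subr_eq0 => /eqP.
Qed.

Lemma soft_bellman_le (pi pi' : S -> A -> R) s :
  (forall a, 0 < pi s a) -> \sum_a pi s a = 1 -> is_dist (pi' s) -> ~~ term s ->
  (forall a, Aref s a = beta * ln (pi s a / piref s a)) ->
  \sum_a pi' s a * (r s a - beta * ln (pi' s a / piref s a) + Vref (f s a)) <= Vref s.
Proof.
move=> pi_gt0 sum_pi [pi'_ge0 sum_pi'] nterm_s Adv_eq.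
apply: (@le_trans _ _ (\sum_a (pi' s a * Vref s + beta * (pi s a - pi' s a)))).
  apply: ler_sum => a _.
  have Q_eq : r s a + Vref (f s a) = Vref s + beta * ln (pi s a / piref s a).
    by rewrite -Adv_eq /Adv /Qf; ring.
  rewrite addrAC Q_eq.
  have -> : pi' s a * (Vref s + beta * ln (pi s a / piref s a)
                       - beta * ln (pi' s a / piref s a)) =
    pi' s a * Vref s + beta * (pi' s a * (ln (pi s a / piref s a) - ln (pi' s a / piref s a))).
    by ring.
  by rewrite lerD2l ler_pM2l // mul_ln_ratioB_le.
by rewrite big_split /= -mulr_suml -mulr_sumr sumrB sum_pi sum_pi' subrr mulr0 addr0 mul1r.
Qed.

Lemma Vreg_le_Vref_of_traj_soft_gain0 (pi pi' : S -> A -> R) s :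
  (forall s a, 0 < pi s a) -> (forall s, \sum_a pi s a = 1) ->
  (forall s a, ~~ term s -> beta * ln (pi s a / piref s a) <= Aref s a) ->
  is_policy pi' -> traj (fun s _ => soft_gain pi s) pi s = 0 ->
  Vreg term f r beta piref pi' s <= Vref s.
Proof.
move=> pi_gt0 sum_pi logratio_le pi'_policy traj0.
have gain_ge0 := soft_gain_ge0 (fun s a => ltW (pi_gt0 s a)) logratio_le.
pose P s := traj (fun s _ => soft_gain pi s) pi s == 0.
have P_step s' a : P s' -> ~~ term s' -> soft_gain pi s' = 0 /\ P (f s' a).
  move=> /eqP P_s' nterm_s'; have [gain0 P_fs'] := traj_sum_eq0_step rank_step a
    (fun s _ => gain_ge0 s) pi_gt0 nterm_s' P_s'.
  by split; last apply/eqP.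
apply: (traj_sum_le_supersolution rank_step (P := P)) => //.
- by move=> s' a; exact: (pi'_policy s').1.
- by move=> s' a Ps' nterm_s'; exact: (P_step s' a Ps' nterm_s').2.
- by move=> s' _ term_s'; rewrite /V (traj_sum_term rank_step).
- move=> s' Ps' nterm_s'; apply: (soft_bellman_le (pi := pi)) => // a.
  apply: Adv_eq_logratio_of_soft_gain0 => //; last exact: (P_step s' a Ps' nterm_s').1.
  by move=> b; exact: logratio_le.
by apply/eqP.
Qed.

Lemma Vreg_mu_le_of_occ_soft_gain0 (pi : S -> A -> R) (mu : S -> R) :
  is_dist mu -> (forall s a, 0 < pi s a) -> (forall s, \sum_a pi s a = 1) ->
  (forall s a, ~~ term s -> beta * ln (pi s a / piref s a) <= Aref s a) ->
  occ_exp term f pi mu (soft_gain pi) = 0 ->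
  forall pi', is_policy pi' ->
  Vreg_mu term f r beta piref pi' mu <= Vreg_mu term f r beta piref piref mu.
Proof.
move=> [mu_ge0 _] pi_gt0 sum_pi logratio_le occ0 pi' pi'_policy.
have gain_ge0 := soft_gain_ge0 (fun s a => ltW (pi_gt0 s a)) logratio_le.
have summand_ge0 s : true -> 0 <= mu s * traj (fun s _ => soft_gain pi s) pi s.
  by rewrite mulr_ge0 ?traj_sum_ge0 // => s' a; rewrite ltW.
apply: ler_sum => s _; rewrite Vreg_ref.
have [->|mu_neq0] := eqVneq (mu s) 0; first by rewrite !mul0r.
rewrite ler_wpM2l // (Vreg_le_Vref_of_traj_soft_gain0 (pi := pi)) //.
have /eqP := psumr_eq0P summand_ge0 occ0 (i := s) isT.
by rewrite mulf_eq0 (negbTE mu_neq0) => /eqP.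
Qed.

Section RegressionSolution.
Variables (nuS : S -> R) (nuA piplus : S -> A -> R).
Hypothesis nuS_gt0 : forall s, 0 < nuS s.
Hypothesis nuA_gt0 : forall s a, 0 < nuA s a.
Hypothesis piplus_policy : is_policy piplus.
Hypothesis piplus_gt0 : forall s a, 0 < piplus s a.
Hypothesis piplus_min : forall pi, is_policy pi -> (forall s a, 0 < pi s a) ->
  loss term f r beta piref nuS nuA piplus <= loss term f r beta piref nuS nuA pi.

Lemma piplus_state_argmin s (q : A -> R) : (forall a, 0 < q a) -> \sum_a q a = 1 ->
  \sum_a nuA s a * (beta^-1 * Aref s a - ln (piplus s a / piref s a)) ^+ 2 <=
  \sum_a nuA s a * (beta^-1 * Aref s a - ln (q a / piref s a)) ^+ 2.
Proof.
move=> q_gt0 sum_q; pose pi s' := if s' == s then q else piplus s'.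
have pi_policy : is_policy pi.
  by move=> s'; rewrite /pi; case: eqP => _ //; split=> // a; rewrite ltW.
have pi_gt0 s' a : 0 < pi s' a by rewrite /pi; case: eqP.
pose state_loss (p : S -> A -> R) s' :=
  \sum_a nuA s' a * (beta^-1 * Aref s' a - ln (p s' a / piref s' a)) ^+ 2.
have : 2^-1 * \sum_s' nuS s' * state_loss piplus s' <=
       2^-1 * \sum_s' nuS s' * state_loss pi s'.
  exact: piplus_min pi_policy pi_gt0.
have other_states : \sum_(s' | s' != s) nuS s' * state_loss pi s' =
                    \sum_(s' | s' != s) nuS s' * state_loss piplus s'.
  by apply: eq_bigr => s' /negbTE neq_s's; rewrite /state_loss /pi neq_s's.
rewrite ler_pM2l ?invr_gt0 // (bigD1 s) //= [leRHS](bigD1 s) //= other_states.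
by rewrite lerD2r ler_pM2l // /state_loss /pi eqxx.
Qed.

Lemma piplus_le_tilt s a : ~~ term s -> piplus s a <= piref s a * expR (beta^-1 * Aref s a).
Proof.
move=> nterm_s.
apply: (@sqr_dev_ln_argmin_le_tilt _ _ (nuA s) _ _ (fun a => beta^-1 * Aref s a)) => //.
- exact: (piplus_policy s).2.
- exact: sum_piref_expR_Adv_ge1.
- exact: piplus_state_argmin.
Qed.

Lemma logratio_piplus_le_Adv s a : ~~ term s ->
  beta * ln (piplus s a / piref s a) <= Aref s a.
Proof.
move=> nterm_s; rewrite -[leRHS](mulVKf (lt0r_neq0 beta_gt0)) ler_pM2l //.
rewrite -[leRHS]expRK ler_ln ?posrE ?divr_gt0 ?expR_gt0 // ler_pdivrMr //.
by rewrite mulrC piplus_le_tilt.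
Qed.
End RegressionSolution.
End SoftPerformanceDifference.

Theorem mainTheorem2 (R : realType) (S A : finType)
  (term : pred S) (f : S -> A -> S) (r : S -> A -> R)
  (mu : S -> R) (beta : R) (piref nuA piplus : S -> A -> R) (nuS : S -> R) :
  (* episodes terminate: a rank strictly decreasing along non-terminal transitions *)
  (exists rank : S -> nat, forall s a, ~~ term s -> (rank (f s a) < rank s)%N) ->
  (* reward is nonzero only on reaching a terminal state *)
  (forall s a, r s a != 0 -> term (f s a)) ->
  is_dist mu ->
  0 < beta ->
  is_policy piref -> (forall s a, 0 < piref s a) ->
  is_dist nuS -> (forall s, 0 < nuS s) ->
  (forall s, is_dist (nuA s)) -> (forall s a, 0 < nuA s a) ->
  (* pi^+ solves the regression problem over all policies (the objective is
     +oo unless pi has full support) *)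
  is_policy piplus -> (forall s a, 0 < piplus s a) ->
  (forall pi, is_policy pi -> (forall s a, 0 < pi s a) ->
     loss term f r beta piref nuS nuA piplus <= loss term f r beta piref nuS nuA pi) ->
  exists lambda : S -> (A -> R) -> R,
    (forall s p, is_dist p -> 0 <= lambda s p) /\
    let gap := Vreg_mu term f r beta piref piplus mu
               - Vreg_mu term f r beta piref piref mu in
    let E := occ_exp term f piplus mu (fun s => lambda s (nuA s)) in
    gap >= E /\ E >= 0 /\
    ((gap = E /\ E = 0) <-> is_optimal term f r beta piref mu piref).
Proof.
move=> [rank rank_step] _ mu_dist beta_gt0 piref_policy piref_gt0 _ nuS_gt0 _ nuA_gt0
  piplus_policy piplus_gt0 piplus_min.
have logratio_le := logratio_piplus_le_Adv rank_step beta_gt0 piref_policy piref_gt0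
  nuS_gt0 nuA_gt0 piplus_policy piplus_gt0 piplus_min.
have piplus_ge0 s a : 0 <= piplus s a by exact: ltW.
have gain_ge0 := soft_gain_ge0 piplus_ge0 logratio_le.
(* λ_s ignores its argument: its dependence on ν_A(·|s) is carried by π⁺. *)
exists (fun s _ => soft_gain term f r beta piref piplus s).
split=> [s p _|gap E]; first exact: gain_ge0.
have gapE : gap = E.
  exact (Vreg_mu_sub r beta rank_step piref_gt0 mu (fun s => (piplus_policy s).2)).
have E_ge0 : 0 <= E by exact: occ_exp_ge0 mu_dist.1 piplus_ge0 gain_ge0.
rewrite gapE; split=> //; split=> //; split.
- case=> _ E0; split=> //.
  exact (Vreg_mu_le_of_occ_soft_gain0 rank_step beta_gt0 piref_gt0 mu_dist
    piplus_gt0 (fun s => (piplus_policy s).2) logratio_le E0).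
- case=> _ /(_ piplus piplus_policy); rewrite -subr_le0 -/gap gapE => E_le0.
  by split=> //; apply/eqP; rewrite eq_le E_le0 E_ge0.
Qed.
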